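(* There exist a finite action set $\mathcal{A}$, a utility function $u:\mathcal{A}\times\{0,1\}\to[-1,1]$ and a constant $c>0$ such that for infinitely many horizons $T$ there are outcomes $\mathbf{x}\in\{0,1\}^T$ and forecasts $\mathbf{p}\in[0,1]^T$ with $$\mathrm{Reg}(\mathbf{p},\mathbf{x})\le -cT \quad\text{and}\quad \mathrm{AgentReg}_u(\mathbf{p},\mathbf{x})\ge cT.$$ (That is, $\mathrm{Reg}(\mathbf p,\mathbf x)=-\Omega(T)$ while $\mathrm{AgentReg}_u(\mathbf p,\mathbf x)=\Omega(T)$.)
   Context: Binary setting. For outcomes $\mathbf{x}=(x_1,\dots,x_T)\in\{0,1\}^T$ and forecasts $\mathbf{p}=(p_1,\dots,p_T)\in[0,1]^T$, the base rate is $\beta=\frac1T\sum_{t=1}^T x_t$. For a scoring rule $\ell:[0,1]\times\{0,1\}\to\mathbb{R}$, $\mathrm{Reg}_\ell(\mathbf p,\mathbf x)=\sum_{t=1}^T\ell(p_t,x_t)-\sum_{t=1}^T\ell(\beta,x_t)$. The Brier score is $\ell_{sq}(p,x)=(x-p)^2$ and $\mathrm{Reg}(\mathbf p,\mathbf x)=\mathrm{Reg}_{\ell_{sq}}(\mathbf p,\mathbf x)$. An agent with finite action set $\mathcal A$ and utility $u:\mathcal A\times\{0,1\}\to[-1,1]$ responds to a forecast $p$ with an action $a(p)\in\arg\max_{a\in\mathcal A}\mathbb{E}_{x\sim\mathrm{Ber}(p)}[u(a,x)]$ (fixed tie-breaking), and $\mathrm{AgentReg}_u(\mathbf p,\mathbf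 x)=\sum_{t=1}^T u(a(\beta),x_t)-\sum_{t=1}^T u(a(p_t),x_t)$. *)

From mathcomp Require Import all_boot all_order all_algebra.
From mathcomp Require Import reals.
Set Implicit Arguments. Unset Strict Implicit. Unset Printing Implicit Defensive.
Import Order.TTheory GRing.Theory Num.Theory.
Local Open Scope ring_scope.

Section Defs.
Variable R : realType.

Definition b2r (x : bool) : R := if x then 1 else 0.

Definition base_rate (T : nat) (x : 'I_T -> bool) : R :=
  (\sum_(t < T) b2r (x t)) / T%:R.

Definition brier (p : R) (x : bool) : R := (b2r x - p) ^+ 2.

Definition Reg_ell (ell : R -> bool -> R) (T : nat) (p : 'I_T -> R)
  (x : 'I_T -> bool) : R :=
  \sum_(t < T) ell (p t) (x t) - \sum_(t < T) ell (base_rate x) (x t).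

Definition Reg (T : nat) (p : 'I_T -> R) (x : 'I_T -> bool) : R :=
  Reg_ell brier p x.

Definition exp_util (A : Type) (u : A -> bool -> R) (q : R) (a : A) : R :=
  q * u a true + (1 - q) * u a false.

(* resp is a best response rule (with some fixed tie-breaking) for u:
   for every forecast q in [0,1], resp q maximizes expected utility. *)
Definition best_response (A : finType) (u : A -> bool -> R) (resp : R -> A) :=
  forall q : R, 0 <= q <= 1 -> forall a' : A, exp_util u q a' <= exp_util u q (resp q).

Definition AgentReg (A : Type) (u : A -> bool -> R) (resp : R -> A)
  (T : nat) (p : 'I_T -> R) (x : 'I_T -> bool) : R :=
  \sum_(t < T) u (resp (base_rate x)) (x t) - \sum_(t < T) u (resp (p t)) (x t).

End Defs.

From mathcomp Require Import all_boot all_order all_algebra.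
From mathcomp Require Import reals.
From mathcomp Require Import ring lra.

Import Order.TTheory GRing.Theory Num.Theory.
Local Open Scope ring_scope.

(* The agent may bet on the outcome (payoff +1 if it is 1, -1 if it is 0) or
   abstain (payoff 0), so it bets exactly when the forecast exceeds 1/2.
   Take T = 3n outcomes, 2n ones followed by n zeros, so the base rate is 2/3 and the agent
   facing the base rate always bets, earning n. Forecasting 1/2 on the ones
   and 0 on the zeros has Brier score n/2 against 2n/3 for the base rate,
   hence regret -T/18, yet it keeps the agent from ever betting: agent regret
   T/3. *)

Lemma sum_ord_addn_lt (S : pzSemiRingType) (m k : nat) (F : bool -> S) :
  \sum_(t < m + k) F (t < m)%N = F true * m%:R + F false * k%:R.
Proof.
rewrite big_split_ord /=.
under eq_bigr => t _ do rewrite ltn_ord.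
under [X in _ + X]eq_bigr => t _ do rewrite ltnNge leq_addr.
by rewrite !sumr_const !card_ord !mulr_natr.
Qed.

Section BetOrAbstain.
Variable R : realType.

Definition bet_util (bet x : bool) : R :=
  if bet then (if x then 1 else -1) else 0.

Definition bet_above_half (q : R) : bool := 1/2 < q.

Lemma bet_util_bounded bet x : -1 <= bet_util bet x <= 1.
Proof. by case: bet; case: x => /=; rewrite /bet_util; lra. Qed.

Lemma best_response_bet_above_half : best_response bet_util bet_above_half.
Proof.
move=> q /andP[q0 q1] bet; rewrite /exp_util /bet_util /bet_above_half.
by case: bet; case: ltrP => ?; lra.
Qed.

Definition block_outcome (n : nat) (t : 'I_(2 * n + n)) : bool := (t < 2 * n)%N.

Definition hedged_forecast (x : bool) : R := if x then 1/2 else 0.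

Variable n : nat.
Hypothesis n_gt0 : (0 < n)%N.

Let x := block_outcome n.
Let p t := hedged_forecast (x t).

Lemma base_rate_block_outcome : base_rate R x = 2/3.
Proof.
have n_pos : (0 : R) < n%:R by rewrite ltr0n.
rewrite /base_rate /x /block_outcome (@sum_ord_addn_lt _ _ _ (b2r R)) /b2r.
rewrite natrD natrM; field; lra.
Qed.

Lemma Reg_block_outcome : Reg p x = - (n%:R / 6).
Proof.
rewrite /Reg /Reg_ell base_rate_block_outcome /p /x /block_outcome.
rewrite (@sum_ord_addn_lt _ _ _ (fun b => brier (hedged_forecast b) b)).
rewrite (@sum_ord_addn_lt _ _ _ (brier (2/3))) /brier /b2r /hedged_forecast.
rewrite natrM; lra.
Qed.

Lemma AgentReg_block_outcome : AgentReg bet_util bet_above_half p x = n%:R.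
Proof.
rewrite /AgentReg base_rate_block_outcome /p /x /block_outcome.
rewrite (@sum_ord_addn_lt _ _ _ (bet_util (bet_above_half (2/3)))).
rewrite (@sum_ord_addn_lt _ _ _ (fun b => bet_util (bet_above_half (hedged_forecast b)) b)).
rewrite /bet_above_half /hedged_forecast /bet_util.
have -> : (1/2 < 2/3 :> R) by lra.
have -> : (1/2 < 0 :> R) = false by apply/negbTE; rewrite -leNgt; lra.
rewrite ltxx natrM; lra.
Qed.

End BetOrAbstain.

Theorem theorem3p1 (R : realType) :
  exists (A : finType) (u : A -> bool -> R) (resp : R -> A) (c : R),
    (forall a x, -1 <= u a x <= 1) /\
    best_response u resp /\
    0 < c /\
    forall N : nat, exists T : nat, (N <= T)%N /\
      exists (x : 'I_T -> bool) (p : 'I_T -> R),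
        (forall t, 0 <= p t <= 1) /\
        Reg p x <= - (c * T%:R) /\
        c * T%:R <= AgentReg u resp p x.
Proof.
exists bool, (@bet_util R), (@bet_above_half R), (1/18).
split; first exact: bet_util_bounded.
split; first exact: best_response_bet_above_half.
split; first lra.
move=> N; exists (2 * N.+1 + N.+1)%N.
split; first exact: leq_trans (leqnSn N) (leq_addl _ _).
exists (block_outcome N.+1), (fun t => hedged_forecast R (block_outcome N.+1 t)).
split; first by move=> t; rewrite /hedged_forecast; case: block_outcome; lra.
rewrite Reg_block_outcome // AgentReg_block_outcome // natrD natrM.
have n_pos : (0 : R) < N.+1%:R by rewrite ltr0n.
split; lra.
Qed.
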